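(* Consider an episodic RMDP with $\mathcal{S}\times\mathcal{A}$-rectangular robust sets, and let $\pi^\star$ be an optimal robust policy. For any Markov policy $\pi$ and any $s\in\mathcal{S}$, $$V^{\pi^\star}_{1,P^\star,\boldsymbol{\Phi}}(s)-V^{\pi}_{1,P^\star,\boldsymbol{\Phi}}(s)\ge\mathbb{E}_{(P^{\pi^\star,\dagger},\pi^\star)}\Big[\sum_{h=1}^H\sum_{a\in\mathcal{A}}\big(\pi^\star_h(a|s_h)-\pi_h(a|s_h)\big)Q^\pi_{h,P^\star,\boldsymbol{\Phi}}(s_h,a)\ \Big|\ s_1=s\Big],$$ where the expectation is over trajectories generated by the policy $\pi^\star$ and the transition kernels $P^{\pi^\star,\dagger}$.
   Context: An episodic RMDP $(\mathcal{S},\mathcal{A},H,P^\star,R,\boldsymbol{\Phi})$ has finite $\mathcal{S},\mathcal{A}$, nominal kernels $P^\star_h$, rewards $R_h\in[0,1]$. $\mathcal{S}\times\mathcal{A}$-rectangularity: $\boldsymbol{\Phi}(P_h)=\bigotimes_{(s,a)}\mathcal{P}(s,a;P_h)$ with $\mathcal{P}(s,a;P_h)\subseteq\Delta(\mathcal{S})$. Robust value functions of a Markov policy: $V^\pi_{h,P^\star,\boldsymbol{\Phi}}(s)$ and $Q^\pi_{h,P^\star,\boldsymbol{\Phi}}(s,a)$ are the infima, over all $\widetilde P_i(\cdot|s',a')\in\mathcal{P}(s',a';P^\star_i)$, of the expected $\sum_{i=h}^HR_i(s_i,a_i)$ under $\pi$ starting from $s_h=s$ (resp. $(s_h,a_h)=(s,a)$);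 $V_{H+1}\equiv0$. An optimal robust policy maximizes $V^\pi_{1,P^\star,\boldsymbol{\Phi}}(s)$ for all $s$. The kernel $P^{\pi^\star,\dagger}_h(\cdot|s,a)$ is a minimizer of $\mathbb{E}_{P}[V^{\pi^\star}_{h+1,P^\star,\boldsymbol{\Phi}}]$ over $P\in\mathcal{P}(s,a;P^\star_h)$ (assumed to exist). *)

From HB Require Import structures.
From mathcomp Require Import all_boot all_order all_algebra.
From mathcomp Require Import classical_sets reals.
Set Implicit Arguments. Unset Strict Implicit. Unset Printing Implicit Defensive.
Import Order.TTheory GRing.Theory Num.Theory.
Local Open Scope ring_scope.
Local Open Scope classical_set_scope.

Section RMDP.
Variables (R : realType) (S A : finType).

Definition is_dist (T : finType) (p : T -> R) : Prop :=
  (forall x, 0 <= p x) /\ \sum_(x : T) p x = 1.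

(* Markov (non-stationary, stochastic) policies: pi h s a = pi_h(a|s) *)
Definition policy := nat -> S -> A -> R.
(* time-indexed transition kernels: P h s a s' = P_h(s'|s,a) *)
Definition kernel := nat -> S -> A -> S -> R.

Definition is_policy (H : nat) (pi : policy) : Prop :=
  forall h, (1 <= h <= H)%N -> forall s, is_dist (pi h s).

(* Expected value of sum_{i=h}^{H} g_i(s_i,a_i) for the Markov chain driven by
   policy pi and kernels P, starting from s_h = s ( [k] = number of remaining
   steps; used with k = H + 1 - h ). *)
Fixpoint exp_sum (P : kernel) (pi : policy) (g : nat -> S -> A -> R)
  (k h : nat) (s : S) : R :=
  match k with
  | 0 => 0
  | k'.+1 => \sum_(a : A) pi h s a *
       (g h s a + \sum_(s' : S) P h s a s' * exp_sum P pi g k' h.+1 s')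
  end.

Definition valV (H : nat) (P : kernel) (Rw : nat -> S -> A -> R) (pi : policy)
  (h : nat) (s : S) : R := exp_sum P pi Rw (H.+1 - h) h s.

Definition valQ (H : nat) (P : kernel) (Rw : nat -> S -> A -> R) (pi : policy)
  (h : nat) (s : S) (a : A) : R :=
  Rw h s a + \sum_(s' : S) P h s a s' * valV H P Rw pi h.+1 s'.

(* S x A-rectangular uncertainty: Phi Ph s a = P(s,a;Ph), a subset of Delta(S) *)
Definition uncertainty := (S -> A -> S -> R) -> S -> A -> set (S -> R).

Definition admissible_from (H : nat) (Pstar : kernel) (Phi : uncertainty)
  (h : nat) (Pt : kernel) : Prop :=
  forall i, (h <= i <= H)%N -> forall s a, Phi (Pstar i) s a (Pt i s a).

Definition robustV (H : nat) (Pstar : kernel) (Phi : uncertainty)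
  (Rw : nat -> S -> A -> R) (pi : policy) (h : nat) (s : S) : R :=
  inf [set valV H Pt Rw pi h s | Pt in admissible_from H Pstar Phi h].

Definition robustQ (H : nat) (Pstar : kernel) (Phi : uncertainty)
  (Rw : nat -> S -> A -> R) (pi : policy) (h : nat) (s : S) (a : A) : R :=
  inf [set valQ H Pt Rw pi h s a | Pt in admissible_from H Pstar Phi h].

End RMDP.

From HB Require Import structures.
From mathcomp Require Import all_boot all_order all_algebra zify.
From mathcomp Require Import classical_sets boolp reals lra.
Set Implicit Arguments. Unset Strict Implicit. Unset Printing Implicit Defensive.
Import Order.TTheory GRing.Theory Num.Theory.
Local Open Scope ring_scope.
Local Open Scope classical_set_scope.

(* By S x A-rectangularity the robust values obey the robust Bellman equations
     Q^q_h(s,a) = R_h(s,a) + inf_{p in P(s,a;P*_h)} <p, V^q_{h+1}>,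
     V^q_h(s)   = sum_a q_h(a|s) Q^q_h(s,a).
   The lower bounds hold kernel by kernel; the infimum is approached, by
   backward induction on h, by splicing near-worst one-step distributions at
   time h onto a near-worst kernel for the later steps.
   Since P^dag attains the infimum for V^{pi*}, Q^{pi*}_h >= R_h + P^dag_h V^{pi*}_{h+1},
   while Q^pi_h <= R_h + P^dag_h V^pi_{h+1}.  Hence D_h = V^{pi*}_h - V^pi_h satisfies
     D_h(s) >= sum_a (pi*_h - pi_h)(a|s) Q^pi_h(s,a)
               + sum_a pi*_h(a|s) <P^dag_h(.|s,a), D_{h+1}>,      D_{H+1} = 0,
   and unrolling this recursion along P^dag and pi* gives the bound. *)

Section ExpectedSum.
Variables (R : realType) (S A : finType).
Implicit Types (P : kernel R S A) (q : policy R S A) (g : nat -> S -> A -> R).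

Lemma dist_sum_mulDr (T : finType) (p f : T -> R) (c : R) :
  is_dist p -> \sum_x p x * (f x + c) = \sum_x p x * f x + c.
Proof.
case=> _ p1; rewrite (eq_bigr _ (fun x _ => mulrDr _ _ _)) big_split /=.
by rewrite -mulr_suml p1 mul1r.
Qed.

Lemma exp_sum_ge0 P q g k h x :
  (forall i, (h <= i < h + k)%N -> forall x a,
     [/\ 0 <= q i x a, 0 <= g i x a & forall y, 0 <= P i x a y]) ->
  0 <= exp_sum P q g k h x.
Proof.
elim: k h x => [//|k IH] h x nn /=; apply: sumr_ge0 => a _.
have [|q0 g0 P0] := nn h _ x a; first lia.
apply/mulr_ge0/addr_ge0 => //; apply: sumr_ge0 => y _; apply/mulr_ge0/IH => // i hi.
by apply: nn; lia.
Qed.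

Lemma exp_sum_le_supersolution P q g (D : nat -> S -> R) k h :
  (forall i, (h <= i < h + k)%N -> forall x a,
     0 <= q i x a /\ forall y, 0 <= P i x a y) ->
  (forall x, 0 <= D (h + k)%N x) ->
  (forall i, (h <= i < h + k)%N -> forall x,
     \sum_a q i x a * (g i x a + \sum_y P i x a y * D i.+1 y) <= D i x) ->
  forall x, exp_sum P q g k h x <= D h x.
Proof.
elim: k h => [|k IH] h nn D_end D_super x /=; first by have := D_end x; rewrite addn0.
have hh : (h <= h < h + k.+1)%N by lia.
apply: le_trans (D_super h hh x); apply: ler_sum => a _; have [q0 P0] := nn h hh x a.
rewrite ler_wpM2l // lerD2l; apply: ler_sum => y _; rewrite ler_wpM2l //.
apply: IH => [i hi|y'|i hi]; [apply: nn; lia | by rewrite addSnnS | apply: D_super; lia].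
Qed.

Lemma exp_sum_eq_from P P' q g k h x :
  (forall i, (h <= i)%N -> P i = P' i) -> exp_sum P q g k h x = exp_sum P' q g k h x.
Proof.
elim: k h x => [//|k IH] h x P_eq /=; apply: eq_bigr => a _.
rewrite P_eq //; congr (_ * (_ + _)); apply: eq_bigr => y _.
by rewrite (IH h.+1) // => i hi; apply: P_eq; lia.
Qed.

Lemma valV_unfold H P Rw q h x : (h <= H)%N ->
  valV H P Rw q h x = \sum_a q h x a * valQ H P Rw q h x a.
Proof. by move=> hH; rewrite /valV subSn. Qed.

Lemma valV_end H P Rw q x : valV H P Rw q H.+1 x = 0.
Proof. by rewrite /valV subnn. Qed.

End ExpectedSum.

Section RobustBellman.
Variables (R : realType) (S A : finType) (H : nat).
Variables (Pstar : kernel R S A) (Rw : nat -> S -> A -> R) (Phi : uncertainty R S A).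
Hypothesis Rw_ge0 : forall h, (1 <= h <= H)%N -> forall s a, 0 <= Rw h s a.
Hypothesis Phi_dist : forall h, (1 <= h <= H)%N -> forall s a p,
  Phi (Pstar h) s a p -> is_dist p.
Hypothesis Phi_neq0 : forall h, (1 <= h <= H)%N -> forall s a,
  Phi (Pstar h) s a !=set0.

Local Notation admissible := (admissible_from H Pstar Phi).

Lemma admissible_le h h' Pt : (h <= h')%N -> admissible h Pt -> admissible h' Pt.
Proof. by move=> hh' adm i hi; apply: adm; lia. Qed.

Lemma admissible_end Pt : admissible H.+1 Pt.
Proof. by move=> i hi; lia. Qed.

Lemma admissible_dist h Pt i x a : (1 <= h)%N -> admissible h Pt ->
  (h <= i <= H)%N -> is_dist (Pt i x a).
Proof. by move=> h1 adm hi; apply: (Phi_dist (h := i)); [lia | apply: adm]. Qed.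

Lemma admissible_exists h : (1 <= h)%N -> exists Pt, admissible h Pt.
Proof.
move=> h1; suff [Pt adm] : exists Pt, admissible 1 Pt.
  by exists Pt; apply: admissible_le adm.
have /choice [f Pf] : forall ixa : nat * S * A, exists p : S -> R,
    (1 <= ixa.1.1 <= H)%N -> Phi (Pstar ixa.1.1) ixa.1.2 ixa.2 p.
  move=> [[i x] a] /=; have [hi|hi] := boolP (1 <= i <= H)%N; last by exists (fun=> 0).
  by have [p Pp] := Phi_neq0 hi x a; exists p.
by exists (fun i x a => f (i, x, a)) => i hi x a; apply: (Pf (i, x, a)).
Qed.

Definition set_kernel (P : kernel R S A) h (Ph : S -> A -> S -> R) : kernel R S A :=
  fun i => if i == h then Ph else P i.

Lemma admissible_set_kernel h Pt Ph : admissible h.+1 Pt ->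
  (forall x a, Phi (Pstar h) x a (Ph x a)) -> admissible h (set_kernel Pt h Ph).
Proof.
move=> adm Ph_in i hi x a; rewrite /set_kernel.
by case: eqP => [->|/eqP ne]; [apply: Ph_in | apply: adm; lia].
Qed.

Lemma valV_set_kernel P h Ph (pi : policy R S A) x :
  valV H (set_kernel P h Ph) Rw pi h.+1 x = valV H P Rw pi h.+1 x.
Proof. by apply: exp_sum_eq_from => i hi; rewrite /set_kernel gtn_eqF. Qed.

Section Policy.
Variable q : policy R S A.
Hypothesis q_policy : is_policy H q.

Local Notation V := (robustV H Pstar Phi Rw q).
Local Notation Q := (robustQ H Pstar Phi Rw q).

Lemma policy_ge0 h x a : (1 <= h <= H)%N -> 0 <= q h x a.
Proof. by move=> hh; case: (q_policy hh x). Qed.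

Lemma valV_ge0 h Pt x : (1 <= h <= H.+1)%N -> admissible h Pt ->
  0 <= valV H Pt Rw q h x.
Proof.
move=> hh adm; apply: exp_sum_ge0 => i hi y a.
have [hi' hi''] : (1 <= i <= H)%N /\ (h <= i <= H)%N by lia.
have [|Pt_ge0 _] := admissible_dist y a _ adm hi''; first lia.
by split; [exact: policy_ge0 | exact: Rw_ge0 |].
Qed.

Lemma robustV_le_valV h Pt x : (1 <= h <= H.+1)%N -> admissible h Pt ->
  V h x <= valV H Pt Rw q h x.
Proof.
move=> hh adm; apply: ge_inf; last by exists Pt.
by exists 0 => _ [Pt' adm' <-]; apply: valV_ge0.
Qed.

Lemma robustV_lb h x b : (1 <= h)%N ->
  (forall Pt, admissible h Pt -> b <= valV H Pt Rw q h x) -> b <= V h x.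
Proof.
move=> h1 lb; have [Pt adm] := admissible_exists h1.
apply: lb_le_inf; first by exists (valV H Pt Rw q h x), Pt.
by move=> _ [Pt' adm' <-]; apply: lb.
Qed.

Lemma robustV_ge0 h x : (1 <= h <= H.+1)%N -> 0 <= V h x.
Proof. by move=> hh; apply: robustV_lb => [|Pt adm]; [lia | apply: valV_ge0]. Qed.

Lemma robustV_end x : V H.+1 x = 0.
Proof.
rewrite /robustV (_ : [set _ | _ in _] = [set 0]) ?inf1 //.
apply/seteqP; split=> [_ [Pt _ <-]|_ ->]; first by rewrite /= valV_end.
by exists (fun _ _ _ _ => 0); [apply: admissible_end | rewrite valV_end].
Qed.

Lemma valQ_ge0 h Pt x a : (1 <= h <= H)%N -> admissible h Pt ->
  0 <= valQ H Pt Rw q h x a.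
Proof.
move=> hh adm; apply: addr_ge0; first exact: Rw_ge0.
have hh' : (h <= h <= H)%N by lia.
have [|Pt_ge0 _] := admissible_dist x a _ adm hh'; first lia.
apply: sumr_ge0 => y _; apply: mulr_ge0 => //.
by apply: valV_ge0; [lia | apply: admissible_le adm].
Qed.

Lemma robustQ_le_valQ h Pt x a : (1 <= h <= H)%N -> admissible h Pt ->
  Q h x a <= valQ H Pt Rw q h x a.
Proof.
move=> hh adm; apply: ge_inf; last by exists Pt.
by exists 0 => _ [Pt' adm' <-]; apply: valQ_ge0.
Qed.

Lemma robustQ_lb h x a b : (1 <= h)%N ->
  (forall Pt, admissible h Pt -> b <= valQ H Pt Rw q h x a) -> b <= Q h x a.
Proof.
move=> h1 lb; have [Pt adm] := admissible_exists h1.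
apply: lb_le_inf; first by exists (valQ H Pt Rw q h x a), Pt.
by move=> _ [Pt' adm' <-]; apply: lb.
Qed.

Definition worst_next_value h x a :=
  inf [set \sum_y p y * V h.+1 y | p in Phi (Pstar h) x a].

Lemma has_inf_next_values h x a : (1 <= h <= H)%N ->
  has_inf [set \sum_y p y * V h.+1 y | p in Phi (Pstar h) x a].
Proof.
move=> hh; split.
  by have [p Pp] := Phi_neq0 hh x a; exists (\sum_y p y * V h.+1 y), p.
exists 0 => _ [p Pp <-]; apply: sumr_ge0 => y _; apply: mulr_ge0.
  by case: (Phi_dist hh Pp).
by apply: robustV_ge0; lia.
Qed.

Lemma worst_next_value_le h x a p : (1 <= h <= H)%N -> Phi (Pstar h) x a p ->
  worst_next_value h x a <= \sum_y p y * V h.+1 y.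
Proof. by move=> hh Pp; apply: ge_inf; [case: (has_inf_next_values x a hh) | exists p]. Qed.

Lemma worst_next_value_approx h x a eps : (1 <= h <= H)%N -> 0 < eps ->
  exists2 p, Phi (Pstar h) x a p &
    \sum_y p y * V h.+1 y < worst_next_value h x a + eps.
Proof.
move=> hh eps0; have [_ [p Pp <-] lt] := inf_adherent eps0 (has_inf_next_values x a hh).
by exists p.
Qed.

Lemma valQ_ge_backup h Pt x a : (1 <= h <= H)%N -> admissible h Pt ->
  Rw h x a + worst_next_value h x a <= valQ H Pt Rw q h x a.
Proof.
move=> hh adm; have hh' : (h <= h <= H)%N by lia.
rewrite lerD2l; apply: le_trans (worst_next_value_le hh (adm h hh' x a)) _.
have [|Pt_ge0 _] := admissible_dist x a _ adm hh'; first lia.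
apply: ler_sum => y _; rewrite ler_wpM2l //.
by apply: robustV_le_valV; [lia | apply: admissible_le adm].
Qed.

Lemma robustQ_ge_backup h x a : (1 <= h <= H)%N ->
  Rw h x a + worst_next_value h x a <= Q h x a.
Proof. by move=> hh; apply: robustQ_lb => [|Pt adm]; [lia | apply: valQ_ge_backup]. Qed.

Lemma robustV_ge_backup h x : (1 <= h <= H)%N ->
  \sum_a q h x a * (Rw h x a + worst_next_value h x a) <= V h x.
Proof.
move=> hh; apply: robustV_lb => [|Pt adm]; first lia.
rewrite valV_unfold; last lia.
by apply: ler_sum => a _; rewrite ler_wpM2l ?policy_ge0 ?valQ_ge_backup.
Qed.

Lemma valV_le_backup h Pt x e : (1 <= h <= H)%N ->
  (forall a, valQ H Pt Rw q h x a <= Rw h x a + worst_next_value h x a + e) ->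
  valV H Pt Rw q h x <= \sum_a q h x a * (Rw h x a + worst_next_value h x a) + e.
Proof.
move=> hh Pt_le; rewrite valV_unfold; last lia.
rewrite -dist_sum_mulDr; last exact: q_policy.
by apply: ler_sum => a _; rewrite ler_wpM2l ?policy_ge0.
Qed.

Lemma valQ_approx h eps : (1 <= h <= H)%N -> 0 < eps ->
  (forall e, 0 < e -> exists2 Pt, admissible h.+1 Pt &
     forall y, valV H Pt Rw q h.+1 y <= V h.+1 y + e) ->
  exists2 Pt, admissible h Pt & forall x a,
    valQ H Pt Rw q h x a <= Rw h x a + worst_next_value h x a + eps.
Proof.
move=> hh eps0 approx; have eps20 : 0 < eps / 2 by rewrite divr_gt0.
have [Pt adm Pt_le] := approx _ eps20.
have /choice [f Pf] : forall xa : S * A, exists p : S -> R,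
    Phi (Pstar h) xa.1 xa.2 p /\
    \sum_y p y * V h.+1 y < worst_next_value h xa.1 xa.2 + eps / 2.
  by move=> [x a]; have [p] := worst_next_value_approx x a hh eps20; exists p.
exists (set_kernel Pt h (fun x a => f (x, a))).
  by apply: admissible_set_kernel => // x a; case: (Pf (x, a)).
move=> x a; have [Pp lt] := Pf (x, a); have p_dist := Phi_dist hh Pp.
rewrite /valQ {1}/set_kernel eqxx -addrA lerD2l.
apply: le_trans (_ : _ <= \sum_y f (x, a) y * (V h.+1 y + eps / 2)) _.
  by apply: ler_sum => y _; rewrite valV_set_kernel ler_wpM2l //; case: p_dist.
by rewrite dist_sum_mulDr //; have := ltW lt; lra.
Qed.

Lemma robustV_approx h eps : (1 <= h <= H.+1)%N -> 0 < eps ->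
  exists2 Pt, admissible h Pt & forall x, valV H Pt Rw q h x <= V h x + eps.
Proof.
move=> hh; move Hk : (H.+1 - h)%N => k.
elim: k h Hk hh eps => [|k IH] h Hk hh eps eps0.
  have -> : h = H.+1 by lia.
  exists (fun _ _ _ _ => 0) => [|x]; first exact: admissible_end.
  by rewrite valV_end robustV_end add0r ltW.
have hh' : (1 <= h <= H)%N by lia.
have [|Pt adm Pt_le] := valQ_approx hh' eps0.
  by move=> e e0; apply: IH => //; lia.
exists Pt => // x; apply: le_trans (valV_le_backup hh' (Pt_le x)) _.
by rewrite lerD2r robustV_ge_backup.
Qed.

Lemma near_worst_kernel h eps : (1 <= h <= H)%N -> 0 < eps ->
  exists2 Pt, admissible h Pt & forall x a,
    valQ H Pt Rw q h x a <= Rw h x a + worst_next_value h x a + eps.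
Proof.
by move=> hh eps0; apply: valQ_approx => // e e0; apply: robustV_approx => //; lia.
Qed.

Lemma robustQ_eq h x a : (1 <= h <= H)%N ->
  Q h x a = Rw h x a + worst_next_value h x a.
Proof.
move=> hh; apply/eqP; rewrite eq_le robustQ_ge_backup // andbT.
apply/ler_addgt0Pr => e e0; have [Pt adm Pt_le] := near_worst_kernel hh e0.
by apply: le_trans (Pt_le x a); apply: robustQ_le_valQ.
Qed.

Lemma robustV_eq h x : (1 <= h <= H)%N -> V h x = \sum_a q h x a * Q h x a.
Proof.
move=> hh; under eq_bigr => a _ do rewrite robustQ_eq //.
apply/eqP; rewrite eq_le robustV_ge_backup // andbT.
apply/ler_addgt0Pr => e e0; have [Pt adm Pt_le] := near_worst_kernel hh e0.
apply: le_trans (valV_le_backup hh (Pt_le x)).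
by apply: robustV_le_valV => //; lia.
Qed.

End Policy.

Section PerformanceDifference.
Variables (pistar pi : policy R S A) (Pdag : kernel R S A).
Hypothesis pistar_policy : is_policy H pistar.
Hypothesis pi_policy : is_policy H pi.
Hypothesis Pdag_in : forall h, (1 <= h <= H)%N -> forall s a,
  Phi (Pstar h) s a (Pdag h s a).
Hypothesis Pdag_min : forall h, (1 <= h <= H)%N -> forall s a p,
  Phi (Pstar h) s a p ->
  \sum_(s' : S) Pdag h s a s' * robustV H Pstar Phi Rw pistar h.+1 s'
    <= \sum_(s' : S) p s' * robustV H Pstar Phi Rw pistar h.+1 s'.

Local Notation Vstar := (robustV H Pstar Phi Rw pistar).
Local Notation Vpi := (robustV H Pstar Phi Rw pi).
Local Notation Qstar := (robustQ H Pstar Phi Rw pistar).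
Local Notation Qpi := (robustQ H Pstar Phi Rw pi).

Definition value_gap h x := Vstar h x - Vpi h x.

Definition advantage h x := \sum_a (pistar h x a - pi h x a) * Qpi h x a.

Lemma robustQ_gap_ge h x a : (1 <= h <= H)%N ->
  \sum_y Pdag h x a y * value_gap h.+1 y <= Qstar h x a - Qpi h x a.
Proof.
move=> hh; rewrite (robustQ_eq pistar_policy) // (robustQ_eq pi_policy) //.
rewrite /value_gap (eq_bigr _ (fun y _ => mulrBr _ _ _)) sumrB.
have worst_star : \sum_y Pdag h x a y * Vstar h.+1 y <= worst_next_value pistar h x a.
  apply: lb_le_inf => [|_ [p Pp <-]]; last exact: Pdag_min.
  by exists (\sum_y Pdag h x a y * Vstar h.+1 y), (Pdag h x a); first exact: Pdag_in.
have worst_pi := worst_next_value_le pi_policy hh (Pdag_in hh x a).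
lra.
Qed.

Lemma value_gap_supersolution h x : (1 <= h <= H)%N ->
  \sum_a pistar h x a * (advantage h x + \sum_y Pdag h x a y * value_gap h.+1 y)
    <= value_gap h x.
Proof.
move=> hh; under eq_bigr => a _ do rewrite addrC.
rewrite dist_sum_mulDr; last exact: pistar_policy.
rewrite /value_gap (robustV_eq pistar_policy) // (robustV_eq pi_policy) // /advantage.
have gap : \sum_a pistar h x a * \sum_y Pdag h x a y * value_gap h.+1 y <=
    \sum_a pistar h x a * (Qstar h x a - Qpi h x a).
  by apply: ler_sum => a _; rewrite ler_wpM2l ?(policy_ge0 pistar_policy) ?robustQ_gap_ge.
rewrite (eq_bigr _ (fun a _ => mulrBr _ _ _)) sumrB in gap.
rewrite (eq_bigr _ (fun a _ => mulrBl _ _ _)) sumrB.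
lra.
Qed.

End PerformanceDifference.

End RobustBellman.

Theorem lemma2 (R : realType) (S A : finType) (H : nat)
  (Pstar : kernel R S A) (Rw : nat -> S -> A -> R) (Phi : uncertainty R S A)
  (pistar : policy R S A) (Pdag : kernel R S A)
  (hPstar : forall h, (1 <= h <= H)%N -> forall s a, is_dist (Pstar h s a))
  (hRw : forall h, (1 <= h <= H)%N -> forall s a, 0 <= Rw h s a <= 1)
  (hPhi : forall h, (1 <= h <= H)%N -> forall s a p,
      Phi (Pstar h) s a p -> is_dist p)
  (hpistar : is_policy H pistar)
  (hopt : forall pi : policy R S A, is_policy H pi -> forall s,
      robustV H Pstar Phi Rw pi 1 s <= robustV H Pstar Phi Rw pistar 1 s)
  (hPdag_in : forall h, (1 <= h <= H)%N -> forall s a,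
      Phi (Pstar h) s a (Pdag h s a))
  (hPdag_min : forall h, (1 <= h <= H)%N -> forall s a p,
      Phi (Pstar h) s a p ->
      \sum_(s' : S) Pdag h s a s' * robustV H Pstar Phi Rw pistar h.+1 s'
        <= \sum_(s' : S) p s' * robustV H Pstar Phi Rw pistar h.+1 s')
  (pi : policy R S A) (hpi : is_policy H pi) (s : S) :
  robustV H Pstar Phi Rw pistar 1 s - robustV H Pstar Phi Rw pi 1 s >=
  exp_sum Pdag pistar
    (fun h x _ => \sum_(a : A) (pistar h x a - pi h x a)
                     * robustQ H Pstar Phi Rw pi h x a)
    H 1 s.
Proof.
have Rw_ge0 h : (1 <= h <= H)%N -> forall x a, 0 <= Rw h x a.
  by move=> hh x a; case/andP: (hRw h hh x a).
have Phi_neq0 h : (1 <= h <= H)%N -> forall x a, Phi (Pstar h) x a !=set0.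
  by move=> hh x a; exists (Pdag h x a); apply: hPdag_in.
apply: (exp_sum_le_supersolution (D := value_gap H Pstar Rw Phi pistar pi)).
- move=> i hi x a; have hi' : (1 <= i <= H)%N by lia.
  split; first exact: (policy_ge0 hpistar x a hi').
  by case: (hPhi i hi' x a _ (hPdag_in i hi' x a)).
- by move=> x; rewrite add1n /value_gap !robustV_end subrr.
- move=> i hi x; have hi' : (1 <= i <= H)%N by lia.
  exact: (value_gap_supersolution Rw_ge0 hPhi Phi_neq0 hpistar hpi hPdag_in hPdag_min x hi').
Qed.
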